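(* Let $H$ be a real or complex Hilbert space of dimension $n$, let $N\ge n$, let $F=\{f_i\}_{i=1}^N$ be a Parseval frame for $H$, and let $\{q_i\}_{i=1}^N$ be a weight number sequence. If the canonical dual of $F$ is the unique 1-erasure probabilistic spectrally optimal dual of $F$, then it is the unique 1-erasure probabilistic optimal dual of $F$, and therefore it is an $m$-erasure probabilistic optimal dual of $F$ for every $m$.
   Context: Inner products are linear in the first argument. A frame $F=\{f_i\}_{i=1}^N$ is Parseval if $\sum_i|\langle f,f_i\rangle|^2=\|f\|^2$ for all $f$; its canonical dual is $\{S_F^{-1}f_i\}=\{f_i\}$. Analysis operator: $\Theta_Ff=(\langle f,f_i\rangle)_i$. Synthesis operator: $\Theta_G^*(c)=\sum_ic_ig_i$. A dual of $F$ is a frame $G=\{g_i\}_{i=1}^N$ with $f=\sum_i\langle f,f_i\rangle g_i=\sum_i\langle f,g_i\rangle f_i$ for all $f$. A probability sequence satisfies $0\le p_i\le1$ and $\sum p_i=1$. Weight numbers: $q_i=\frac{\sum_jp_j}{\sum_jp_j-p_i}\cdot\frac{N-1}{n}$ (assumed well defined). For $1\le m\le N$, $\mathcal{D}_m^p$ is the set of $N\times N$ diagonal matrices $D$ for which there is $\Lambda$ with $|\Lambda|=m$, $D_{ii}=q_i$ for $i\in\Lambda$ and $0$ otherwise. Define $d_m^p(F,G)=\max\{\|\Theta_G^*D\Theta_F\|:D\in\mathcal{D}_m^p\}$ (operator norm) and $\mathcal{R}_1^p(F,G)=\max\{\rho(\Theta_G^*D\Theta_F):D\in\mathcal{D}_1^p\}$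 ($\rho$ the spectral radius). $G$ is a 1-erasure probabilistic spectrally optimal dual of $F$ if $\mathcal{R}_1^p(F,G)=\inf\{\mathcal{R}_1^p(F,G'):G'\text{ a dual of }F\}$. Optimal duals (operator norm) are defined recursively: - $G$ is a 1-erasure probabilistic optimal dual if $d_1^p(F,G)=\inf\{d_1^p(F,G'):G'\text{ a dual of }F\}$; - for $m\ge2$, $G$ is an $m$-erasure probabilistic optimal dual if it is an $(m-1)$-erasure probabilistic optimal dual and $d_m^p(F,G)=\inf\{d_m^p(F,G'):G'\text{ an }(m-1)\text{-erasure probabilistic optimal dual of }F\}$. *)

From HB Require Import structures.
From mathcomp Require Import all_boot all_order all_algebra.
From mathcomp Require Import complex.
From mathcomp Require Import boolp classical_sets reals.
Set Implicit Arguments. Unset Strict Implicit. Unset Printing Implicit Defensive.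
Import Order.TTheory GRing.Theory Num.Theory.
Local Open Scope ring_scope.
Local Open Scope classical_set_scope.

Section FrameDefs.
Variable R : realType.

(* Scalar field: b = false -> real Hilbert space, b = true -> complex. *)
Definition scal (b : bool) : numFieldType := if b then (R[i] : numFieldType) else (R : numFieldType).

(* embedding of the scalars into C (used for absolute values and eigenvalues) *)
Definition emb (b : bool) : scal b -> R[i] :=
  match b as b' return scal b' -> R[i] with
  | true => fun z => z
  | false => fun x => (x%:C)%C
  end.

Definition conjK (b : bool) : scal b -> scal b :=
  match b as b' return scal b' -> scal b' with
  | true => fun z => conjc z
  | false => fun x => x
  end.

Definition ofR (b : bool) : R -> scal b :=
  match b as b' return R -> scal b' with
  | true => fun x => (x%:C)%C
  | false => fun x => x
  end.

Variables (b : bool) (n N : nat).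
Local Notation K := (scal b).
Local Notation vec := 'cV[K]_n.

Definition absK (z : K) : R := Normc.normc (emb z).

(* inner product, linear in the first argument *)
Definition inner (x y : vec) : K := \sum_(k < n) x k 0 * conjK (y k 0).

Definition vnorm (x : vec) : R := Num.sqrt (\sum_(k < n) absK (x k 0) ^+ 2).

Definition is_frame (F : 'I_N -> vec) : Prop :=
  exists A B : R, 0 < A /\ 0 < B /\ forall f : vec,
    A * vnorm f ^+ 2 <= \sum_(i < N) absK (inner f (F i)) ^+ 2 /\
    \sum_(i < N) absK (inner f (F i)) ^+ 2 <= B * vnorm f ^+ 2.

Definition is_parseval (F : 'I_N -> vec) : Prop :=
  forall f : vec, \sum_(i < N) absK (inner f (F i)) ^+ 2 = vnorm f ^+ 2.

Definition is_dual (F G : 'I_N -> vec) : Prop :=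
  is_frame G /\ forall f : vec,
    f = \sum_(i < N) inner f (F i) *: G i /\ f = \sum_(i < N) inner f (G i) *: F i.

(* analysis operator Theta_F : K^n -> K^N, (Theta_F f)_i = <f, f_i> *)
Definition analysis (F : 'I_N -> vec) : 'M[K]_(N, n) :=
  \matrix_(i < N, k < n) conjK (F i k 0).
(* synthesis operator Theta_G^* : K^N -> K^n, c |-> sum_i c_i g_i *)
Definition synthesis (G : 'I_N -> vec) : 'M[K]_(n, N) :=
  \matrix_(k < n, i < N) G i k 0.

Definition frame_op (F : 'I_N -> vec) : 'M[K]_n := synthesis F *m analysis F.
Definition canonical_dual (F : 'I_N -> vec) : 'I_N -> vec :=
  fun i => invmx (frame_op F) *m F i.

Definition opnorm (T : 'M[K]_n) : R := sup [set vnorm (T *m x) | x in [set x : vec | vnorm x <= 1]].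
Definition spec_radius (T : 'M[K]_n) : R :=
  sup [set Normc.normc l | l in [set l : R[i] | root (char_poly (map_mx (@emb b) T)) l]].

Definition is_prob_seq (p : 'I_N -> R) : Prop :=
  (forall i, 0 <= p i <= 1) /\ \sum_(i < N) p i = 1.
Definition weight (p : 'I_N -> R) (i : 'I_N) : R :=
  (\sum_(j < N) p j) / (\sum_(j < N) p j - p i) * (N.-1%:R / n%:R).

Definition Dset (p : 'I_N -> R) (m : nat) : set 'M[K]_N :=
  [set D | exists L : {set 'I_N}, #|L| = m /\
     D = diag_mx (\row_(i < N) (if i \in L then ofR b (weight p i) else 0))].

Definition d_m (p : 'I_N -> R) (m : nat) (F G : 'I_N -> vec) : R :=
  sup [set opnorm (synthesis G *m D *m analysis F) | D in Dset p m].
Definition R_1 (p : 'I_N -> R) (F G : 'I_N -> vec) : R :=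
  sup [set spec_radius (synthesis G *m D *m analysis F) | D in Dset p 1].

Definition spec_opt_dual (p : 'I_N -> R) (F G : 'I_N -> vec) : Prop :=
  is_dual F G /\ R_1 p F G = inf [set R_1 p F G' | G' in [set G' | is_dual F G']].

(* opt_dual p F k G : G is a k-erasure probabilistic optimal dual (k >= 1);
   opt_dual p F 0 G means G is a dual of F. *)
Fixpoint opt_dual (p : 'I_N -> R) (F : 'I_N -> vec) (k : nat) (G : 'I_N -> vec) : Prop :=
  match k with
  | 0 => is_dual F G
  | k'.+1 => opt_dual p F k' G /\
      d_m p k'.+1 F G = inf [set d_m p k'.+1 F G' | G' in [set G' | opt_dual p F k' G']]
  end.

End FrameDefs.

From HB Require Import structures.
From mathcomp Require Import all_boot all_order all_algebra.
From mathcomp Require Import complex.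
From mathcomp Require Import boolp classical_sets reals.
From mathcomp Require Import ring lra.
Import Order.TTheory GRing.Theory Num.Theory.
Set Implicit Arguments. Unset Strict Implicit. Unset Printing Implicit Defensive.
Local Open Scope ring_scope.
Local Open Scope classical_set_scope.

(** With one erasure, the error operator of a dual [G] is the rank-one map
    [x |-> q_i <x, f_i> g_i]. Its spectral radius is [|q_i <g_i, f_i>|] and its
    norm [|q_i| |f_i| |g_i|], so Cauchy-Schwarz gives [R_1(F,G) <= d_1(F,G)],
    with equality for [G = F]. A Parseval frame is its own canonical dual,
    hence for every dual [G]
      [d_1(F,F) = R_1(F,F) <= R_1(F,G) <= d_1(F,G)]:
    [F] is 1-erasure optimal, and a 1-erasure optimal [G] satisfies
    [R_1(F,G) <= d_1(F,G) = d_1(F,F) = R_1(F,F)], so it is spectrally optimal and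
    thus equal to [F]. Once the (m-1)-erasure optimal dual is unique, the
    infimum defining m-erasure optimality ranges over a singleton. Besides the
    spectral hypothesis, only the Parseval property of [F] is used. *)

Section Scalars.
Variables (R : realType) (b : bool).
Local Notation K := (scal R b).

Lemma emb_is_zmod_morphism : zmod_morphism (@emb R b).
Proof. by case: b => x y //=; rewrite rmorphB. Qed.
HB.instance Definition _ :=
  GRing.isZmodMorphism.Build K R[i] (@emb R b) emb_is_zmod_morphism.
Lemma emb_is_monoid_morphism : monoid_morphism (@emb R b).
Proof. by case: b; split => [|x y] /=; rewrite ?rmorph1 ?rmorphM. Qed.
HB.instance Definition _ :=
  GRing.isMonoidMorphism.Build K R[i] (@emb R b) emb_is_monoid_morphism.

Lemma conjK_is_zmod_morphism : zmod_morphism (@conjK R b).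
Proof. by case: b => x y //=; rewrite rmorphB. Qed.
HB.instance Definition _ :=
  GRing.isZmodMorphism.Build K K (@conjK R b) conjK_is_zmod_morphism.
Lemma conjK_is_monoid_morphism : monoid_morphism (@conjK R b).
Proof. case: b; split => [|x y] //=; [exact: conjc1 | exact: (rmorphM conjc)]. Qed.
HB.instance Definition _ :=
  GRing.isMonoidMorphism.Build K K (@conjK R b) conjK_is_monoid_morphism.

Lemma ofR_is_zmod_morphism : zmod_morphism (@ofR R b).
Proof. by case: b => x y //=; rewrite rmorphB. Qed.
HB.instance Definition _ :=
  GRing.isZmodMorphism.Build R K (@ofR R b) ofR_is_zmod_morphism.
Lemma ofR_is_monoid_morphism : monoid_morphism (@ofR R b).
Proof. by case: b; split => [|x y] //=; rewrite ?rmorph1 ?rmorphM. Qed.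
HB.instance Definition _ :=
  GRing.isMonoidMorphism.Build R K (@ofR R b) ofR_is_monoid_morphism.

Lemma emb_inj : injective (@emb R b).
Proof. exact: fmorph_inj. Qed.
Lemma emb_conjK (x : K) : emb (conjK x) = conjc (emb x).
Proof. by case: b x => x /=; rewrite ?oppr0. Qed.
Lemma emb_ofR r : emb (@ofR R b r) = (r%:C)%C.
Proof. by case: b. Qed.
Lemma conjKK (x : K) : conjK (conjK x) = x.
Proof. by case: b x => x //=; rewrite conjcK. Qed.

Lemma normc_emb (x : K) : `|emb x| = ((absK x)%:C)%C.
Proof. by []. Qed.
Lemma absK_ge0 (x : K) : 0 <= absK x.
Proof. by rewrite -lecR -normc_emb normr_ge0. Qed.
Lemma absK0 : absK (0 : K) = 0.
Proof. by rewrite /absK rmorph0 Normc.normc0. Qed.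
Lemma absK_eq0 (x : K) : absK x = 0 -> x = 0.
Proof. by move=> x0; apply: emb_inj; rewrite rmorph0; apply: Normc.eq0_normc. Qed.
Lemma absKM (x y : K) : absK (x * y) = absK x * absK y.
Proof. by apply: complexI; rewrite rmorphM /= -!normc_emb rmorphM normrM. Qed.
Lemma absK_conjK (x : K) : absK (conjK x) = absK x.
Proof. by apply: complexI; rewrite -!normc_emb emb_conjK normcJ. Qed.
Lemma absK_ofR r : absK (@ofR R b r) = `|r|.
Proof.
apply: complexI; rewrite -normc_emb emb_ofR.
by rewrite normc_def /= expr0n /= addr0 sqrtr_sqr.
Qed.
Lemma ler_absK_sum (I : finType) (x : I -> K) :
  absK (\sum_i x i) <= \sum_i absK (x i).
Proof.
rewrite -lecR -normc_emb !rmorph_sum /=; apply: le_trans (ler_norm_sum _ _ _) _.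
by apply: ler_sum => i _; rewrite normc_emb.
Qed.
Lemma mul_conjK (x : K) : x * conjK x = @ofR R b (absK x ^+ 2).
Proof.
apply: emb_inj; rewrite rmorphM /= emb_conjK emb_ofR rmorphXn /= -normc_emb.
by rewrite sqr_normc.
Qed.

End Scalars.

Lemma sum_CauchySchwarz (R : realFieldType) (I : finType) (a c : I -> R) :
  (\sum_i a i * c i) ^+ 2 <= (\sum_i a i ^+ 2) * (\sum_i c i ^+ 2).
Proof.
set A := \sum_i a i ^+ 2; set B := \sum_i c i ^+ 2; set C := \sum_i a i * c i.
have A_ge0 : 0 <= A by apply: sumr_ge0 => i _; apply: sqr_ge0.
have [A0|A_neq0] := eqVneq A 0.
  have a0 i : a i = 0.
    apply/eqP; rewrite -sqrf_eq0; apply/eqP.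
    by move: A0 => /psumr_eq0P; apply => // j _; apply: sqr_ge0.
  rewrite /C big1 => [|i _]; last by rewrite a0 mul0r.
  by rewrite A0 mul0r expr0n.
have A_gt0 : 0 < A by rewrite lt_def A_neq0.
(* expand [0 <= \sum_i (A c_i - C a_i)^2 = A (A B - C^2)] *)
have : 0 <= \sum_i (A * c i - C * a i) ^+ 2 by apply: sumr_ge0 => i _; apply: sqr_ge0.
have -> : \sum_i (A * c i - C * a i) ^+ 2 = A ^+ 2 * B - A * C * C *+ 2 + C ^+ 2 * A.
  rewrite (eq_bigr (fun i =>
    A ^+ 2 * c i ^+ 2 - A * C * (a i * c i) *+ 2 + C ^+ 2 * a i ^+ 2)) => [|i _]; last by ring.
  by rewrite big_split /= sumrB -!mulr_sumr sumrMnl -mulr_sumr.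
nra.
Qed.

Section Vectors.
Variables (R : realType) (b : bool) (n : nat).
Local Notation K := (scal R b).
Local Notation vec := 'cV[K]_n.

Lemma vnorm_ge0 (x : vec) : 0 <= vnorm x.
Proof. exact: sqrtr_ge0. Qed.
Lemma vnorm0 : vnorm (0 : vec) = 0.
Proof. by rewrite /vnorm big1 ?sqrtr0 // => k _; rewrite mxE absK0 expr0n. Qed.
Lemma vnormZ a (x : vec) : vnorm (a *: x) = absK a * vnorm x.
Proof.
rewrite /vnorm (eq_bigr (fun k => absK a ^+ 2 * absK (x k 0) ^+ 2)); last first.
  by move=> k _; rewrite mxE absKM exprMn.
by rewrite -mulr_sumr sqrtrM ?sqr_ge0 // sqrtr_sqr ger0_norm ?absK_ge0.
Qed.
Lemma sqr_vnorm (x : vec) : vnorm x ^+ 2 = \sum_k absK (x k 0) ^+ 2.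
Proof. by rewrite sqr_sqrtr // sumr_ge0 // => i _; apply: sqr_ge0. Qed.

Lemma innerxx (x : vec) : inner x x = ofR b (vnorm x ^+ 2).
Proof. by rewrite sqr_vnorm rmorph_sum; apply: eq_bigr => i _; rewrite mul_conjK. Qed.
Lemma innerZl a (x y : vec) : inner (a *: x) y = a * inner x y.
Proof. by rewrite /inner mulr_sumr; apply: eq_bigr => i _; rewrite mxE mulrA. Qed.

Lemma inner_CauchySchwarz (x y : vec) : absK (inner x y) <= vnorm x * vnorm y.
Proof.
rewrite /inner; apply: le_trans; first exact: ler_absK_sum.
under eq_bigr do rewrite absKM absK_conjK.
have xy_ge0 : 0 <= \sum_k absK (x k 0) * absK (y k 0).
  by apply: sumr_ge0 => k _; rewrite mulr_ge0 ?absK_ge0.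
rewrite -(ger0_norm xy_ge0) -sqrtr_sqr /vnorm -sqrtrM ?sumr_ge0 // => [|k _].
  by rewrite ler_sqrt ?sum_CauchySchwarz // mulr_ge0 // sumr_ge0 // => k _; apply: sqr_ge0.
exact: sqr_ge0.
Qed.

End Vectors.

Section SupInf.
Variable R : realType.
Implicit Types (S : set R) (x : R).

Lemma sup_eq_max S x : S x -> ubound S x -> sup S = x.
Proof.
move=> Sx ubx; apply/le_anti; rewrite ge_sup //=; last by exists x.
by apply: ub_le_sup => //; exists x.
Qed.
Lemma inf_eq_min S x : S x -> lbound S x -> inf S = x.
Proof.
move=> Sx lbx; apply/le_anti; rewrite lb_le_inf ?andbT //=; last by exists x.
by apply: ge_inf => //; exists x.
Qed.

(* [sup set0 = 0], which is why the bound must be nonnegative *)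
Lemma ge_sup_nonneg S x : 0 <= x -> ubound S x -> sup S <= x.
Proof.
move=> x_ge0 ubx; have [S0|/set0P [y Sy]] := eqVneq S set0; first by rewrite S0 sup0.
by rewrite ge_sup //; exists y.
Qed.
Lemma sup_ge0 S : has_ubound S -> (forall y, S y -> 0 <= y) -> 0 <= sup S.
Proof.
move=> ubS S_ge0; have [S0|/set0P [y Sy]] := eqVneq S set0; first by rewrite S0 sup0.
by apply: le_trans (S_ge0 _ Sy) _; apply: ub_le_sup.
Qed.

Lemma has_ubound_range (I : finType) (h : I -> R) : has_ubound (range h).
Proof. by exists (\big[Order.max/0]_i h i) => _ [i _ <-]; apply: le_bigmax. Qed.

Lemma le_sup_range (I : finType) (h h' : I -> R) :
  (forall i, h i <= h' i) -> sup (range h) <= sup (range h').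
Proof.
move=> le_hh'; have [[i0]|I0] := pselect (inhabited I).
  apply: ge_sup; first by exists (h i0), i0.
  move=> _ [i _ <-]; apply: le_trans (le_hh' i) _.
  by apply: ub_le_sup; [exact: has_ubound_range | exists i].
have range0 (k : I -> R) : range k = set0.
  by rewrite -subset0 => y [i _ _]; apply: I0.
by rewrite !range0.
Qed.

End SupInf.

Section RankOne.
Variables (R : realType) (b : bool) (n : nat).
Local Notation K := (scal R b).
Local Notation vec := 'cV[K]_n.
Local Notation adj f := (map_mx (@conjK R b) f)^T.
Local Notation embmx := (map_mx (@emb R b)).
Local Notation adjC f := (map_mx conjc (embmx f))^T.

Definition rank_one (c : K) (g f : vec) : 'M[K]_n := c *: (g *m adj f).

Lemma adj_mul (f x : vec) : adj f *m x = (inner x f)%:M.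
Proof.
apply/matrixP => i j; rewrite !ord1 !mxE /inner; apply: eq_bigr => k _.
by rewrite !mxE mulrC.
Qed.

Lemma rank_one_mul c (g f x : vec) : rank_one c g f *m x = (c * inner x f) *: g.
Proof. by rewrite -scalemxAl -mulmxA adj_mul mul_mx_scalar scalerA. Qed.

Lemma opnorm_rank_one c (g f : vec) :
  opnorm (rank_one c g f) = absK c * vnorm f * vnorm g.
Proof.
apply: sup_eq_max => [|_ [x /= x_le1 <-]]; last first.
  rewrite rank_one_mul vnormZ absKM -!mulrA ler_wpM2l ?absK_ge0 //.
  rewrite ler_wpM2r ?vnorm_ge0 //; apply: le_trans (inner_CauchySchwarz _ _) _.
  exact: ler_piMl (vnorm_ge0 _) x_le1.
have [f0|f_neq0] := eqVneq (vnorm f) 0.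
  by exists 0; rewrite /= ?mulmx0 vnorm0 ?f0 ?mulr0 ?mul0r.
exists (ofR b (vnorm f)^-1 *: f).
  by rewrite /= vnormZ absK_ofR ger0_norm ?invr_ge0 ?vnorm_ge0 // mulVf.
rewrite rank_one_mul vnormZ absKM innerZl innerxx -rmorphM absK_ofR ger0_norm.
  by congr (_ * _ * _); rewrite expr2 mulrA mulVf // mul1r.
by rewrite mulr_ge0 ?invr_ge0 ?exprn_ge0 ?vnorm_ge0.
Qed.

Lemma embmx_rank_one c (g f : vec) :
  embmx (rank_one c g f) = emb c *: (embmx g *m adjC f).
Proof.
rewrite map_mxZ map_mxM -map_trmx; congr (_ *: (_ *m _^T)).
by apply/matrixP => i j; rewrite !mxE; apply: emb_conjK.
Qed.

Lemma adjC_mul (f x : vec) : adjC f *m embmx x = (emb (inner x f))%:M.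
Proof.
apply/matrixP => i j; rewrite !ord1 !mxE /inner rmorph_sum; apply: eq_bigr => k _.
by rewrite !mxE rmorphM /= emb_conjK mulrC.
Qed.

Lemma eigenvalue_rank_one c (g f : vec) l :
  root (char_poly (embmx (rank_one c g f))) l -> l = 0 \/ l = emb (c * inner g f).
Proof.
rewrite -eigenvalue_root_char => /eigenvalueP [v v_eigen v_neq0].
have [->|l_neq0] := eqVneq l 0; [by left | right].
rewrite embmx_rank_one -scalemxAr mulmxA [v *m _]mx11_scalar mul_scalar_mx in v_eigen.
set s := (v *m embmx g) 0 0 in v_eigen; rewrite scalerA in v_eigen.
have v_adjC : v = (emb c * s / l) *: adjC f.
  by rewrite -[v](scalerK l_neq0) -v_eigen scalerA mulrC.
have s_neq0 : s != 0.
  by apply: contra v_neq0 => /eqP s0; rewrite v_adjC s0 mulr0 mul0r scale0r.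
have s_eq : s = emb c * s / l * emb (inner g f).
  by rewrite {1}/s {1}v_adjC -scalemxAl adjC_mul mxE /= mxE eqxx mulr1n.
by rewrite rmorphM /=; apply: (mulfI s_neq0); rewrite {1}s_eq; field.
Qed.

Lemma eigenvalue_rank_one_self c (f : vec) : emb (c * inner f f) != 0 ->
  root (char_poly (embmx (rank_one c f f))) (emb (c * inner f f)).
Proof.
move=> cff_neq0; rewrite -eigenvalue_root_char; apply/eigenvalueP; exists (adjC f).
  by rewrite embmx_rank_one -scalemxAr mulmxA adjC_mul mul_scalar_mx scalerA rmorphM.
apply: contra cff_neq0 => /eqP adjC0.
have inner_ff : emb (inner f f) = (adjC f *m embmx f) 0 0.
  by rewrite adjC_mul mxE eqxx.
by rewrite rmorphM /= inner_ff adjC0 mul0mx mxE mulr0.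
Qed.

Lemma ubound_eigenvalues_rank_one c (g f : vec) :
  ubound [set Normc.normc l | l in [set l | root (char_poly (embmx (rank_one c g f))) l]]
    (absK (c * inner g f)).
Proof.
by move=> _ [l /= /eigenvalue_rank_one [|] -> <-]; rewrite ?Normc.normc0 ?absK_ge0.
Qed.

Lemma spec_radius_rank_one_le c (g f : vec) :
  spec_radius (rank_one c g f) <= absK (c * inner g f).
Proof. exact/ge_sup_nonneg/ubound_eigenvalues_rank_one/absK_ge0. Qed.

Lemma spec_radius_rank_one_ge0 c (g f : vec) : 0 <= spec_radius (rank_one c g f).
Proof.
apply: sup_ge0 => [|_ [l _ <-]]; last by case: l => ? ?; apply: sqrtr_ge0.
by exists (absK (c * inner g f)); apply: ubound_eigenvalues_rank_one.
Qed.

Lemma spec_radius_rank_one_self c (f : vec) :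
  spec_radius (rank_one c f f) = absK (c * inner f f).
Proof.
apply/le_anti; rewrite spec_radius_rank_one_le /=.
have [->|cff_neq0] := eqVneq (absK (c * inner f f)) 0.
  exact: spec_radius_rank_one_ge0.
apply: ub_le_sup.
  by exists (absK (c * inner f f)); apply: ubound_eigenvalues_rank_one.
exists (emb (c * inner f f)) => //; apply: eigenvalue_rank_one_self.
by apply: contra cff_neq0 => /eqP cff0; rewrite /absK cff0 Normc.normc0.
Qed.

End RankOne.

Section OneErasure.
Variables (R : realType) (b : bool) (n N : nat).
Local Notation K := (scal R b).
Local Notation vec := 'cV[K]_n.
Variables (p : 'I_N -> R) (F : 'I_N -> vec).

Definition erasure1_mx (i : 'I_N) : 'M[K]_N :=
  diag_mx (\row_j (if j \in [set i]%SET then ofR b (weight n p j) else 0)).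

Lemma Dset1P D : Dset n p 1 D <-> exists i, D = erasure1_mx i.
Proof.
split => [[L [/eqP/cards1P [i ->] ->]]|[i ->]]; first by exists i.
by exists [set i]%SET; rewrite cards1.
Qed.

Lemma synthesis_erasure1_analysis (G : 'I_N -> vec) i :
  synthesis G *m erasure1_mx i *m analysis F = rank_one (ofR b (weight n p i)) (G i) (F i).
Proof.
apply/matrixP => k l; rewrite mul_mx_diag !mxE (bigD1 i) //= big1 => [|j j_neq_i].
  by rewrite !mxE inE eqxx addr0 big_ord1 !mxE [ord0]ord1; ring.
by rewrite !mxE inE (negPf j_neq_i) mulr0 mul0r.
Qed.

Lemma erasure1_image (Phi : 'M[K]_n -> R) (G : 'I_N -> vec) :
  [set Phi (synthesis G *m D *m analysis F) | D in Dset n p 1] =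
  range (fun i => Phi (rank_one (ofR b (weight n p i)) (G i) (F i))).
Proof.
apply/seteqP; split => y.
  by move=> [D /Dset1P [i ->] <-]; exists i; rewrite // synthesis_erasure1_analysis.
move=> [i _ <-]; exists (erasure1_mx i); first by apply/Dset1P; exists i.
by rewrite synthesis_erasure1_analysis.
Qed.

Lemma R1_le_d1 (G : 'I_N -> vec) : R_1 p F G <= d_m p 1 F G.
Proof.
rewrite /R_1 /d_m !erasure1_image; apply: le_sup_range => i.
apply: le_trans (spec_radius_rank_one_le _ _ _) _.
rewrite opnorm_rank_one absKM -mulrA ler_wpM2l ?absK_ge0 // mulrC.
exact: inner_CauchySchwarz.
Qed.

Lemma d1_self_eq_R1 : d_m p 1 F F = R_1 p F F.
Proof.
rewrite /R_1 /d_m !erasure1_image; do 2 apply: congr1; apply/funext => i.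
rewrite opnorm_rank_one spec_radius_rank_one_self absKM innerxx !absK_ofR.
by rewrite (ger0_norm (exprn_ge0 2 (vnorm_ge0 _))) expr2 mulrA.
Qed.

Lemma R1_ge0 (G : 'I_N -> vec) : 0 <= R_1 p F G.
Proof.
rewrite /R_1 erasure1_image; apply: sup_ge0 => [|_ [i _ <-]].
  exact: has_ubound_range.
exact: spec_radius_rank_one_ge0.
Qed.

End OneErasure.

Section OptimalDuals.
Variables (R : realType) (b : bool) (n N : nat).
Local Notation vec := 'cV[scal R b]_n.
Variables (p : 'I_N -> R) (F : 'I_N -> vec).

Lemma inf_R1_le (G : 'I_N -> vec) : is_dual F G ->
  inf [set R_1 p F G' | G' in [set G' | is_dual F G']] <= R_1 p F G.
Proof.
move=> dualG; apply: ge_inf; last by exists G.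
by exists 0 => _ [G' _ <-]; apply: R1_ge0.
Qed.

Section SpectrallyOptimal.
Variable G0 : 'I_N -> vec.
Hypotheses (specG0 : spec_opt_dual p F G0) (d1G0 : d_m p 1 F G0 = R_1 p F G0).

Lemma spec_opt_opt_dual1 : opt_dual p F 1 G0.
Proof.
have [dualG0 R1G0] := specG0; split; first exact: dualG0.
apply/esym/inf_eq_min; first by exists G0.
move=> _ [G /= dualG <-]; rewrite d1G0 R1G0.
exact: le_trans (inf_R1_le dualG) (R1_le_d1 p F G).
Qed.

Lemma opt_dual1_spec_opt G : opt_dual p F 1 G -> spec_opt_dual p F G.
Proof.
move=> [dualG d1G]; split; first exact: dualG.
apply/le_anti; rewrite inf_R1_le // andbT.
have [_ d1G0_inf] := spec_opt_opt_dual1; have [_ <-] := specG0.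
by rewrite -d1G0 d1G0_inf -d1G R1_le_d1.
Qed.

End SpectrallyOptimal.

Lemma opt_dual_opt_dual1 k G : opt_dual p F k.+1 G -> opt_dual p F 1 G.
Proof. by elim: k => [|k IH] [optG _] //; apply: IH. Qed.

Lemma opt_dual_succ k G0 : opt_dual p F k G0 ->
  (forall G, opt_dual p F k G -> G = G0) -> opt_dual p F k.+1 G0.
Proof.
move=> optG0 uniqG0; split; first exact: optG0.
rewrite (_ : [set _ | _ in _] = [set d_m p k.+1 F G0]) ?inf1 //.
by apply/seteqP; split => [_ [G /uniqG0 -> <-] //|_ ->]; exists G0.
Qed.

Lemma unique_opt_dual1_opt_dual G0 : opt_dual p F 1 G0 ->
  (forall G, opt_dual p F 1 G -> G = G0) -> forall m, (0 < m)%N -> opt_dual p F m G0.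
Proof.
move=> opt1 uniq1 [//|m] _; elim: m => [|k IH]; first exact: opt1.
by apply: opt_dual_succ IH _ => G /opt_dual_opt_dual1 /uniq1.
Qed.

End OptimalDuals.

Section Parseval.
Variables (R : realType) (b : bool) (n N : nat).
Local Notation K := (scal R b).
Local Notation vec := 'cV[K]_n.
Local Notation adj f := (map_mx (@conjK R b) f)^T.
Local Notation quad A f := ((adj f *m A *m f) 0 0).

Lemma quad_delta (A : 'M[K]_n) k : quad A (delta_mx k 0 : vec) = A k k.
Proof. by rewrite map_delta_mx (@trmx_delta K n 1 k 0) -rowE -colE !mxE. Qed.

Lemma quad_deltaD (A : 'M[K]_n) k l (t : K) :
  quad A (delta_mx k 0 + t *: delta_mx l 0 : vec) =
  A k k + t * A k l + conjK t * A l k + conjK t * t * A l l.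
Proof.
have -> : adj (delta_mx k 0 + t *: delta_mx l 0 : vec) =
    delta_mx 0 k + conjK t *: delta_mx 0 l.
  apply/matrixP => i j; rewrite !mxE rmorphD rmorphM /= !rmorph_nat.
  by rewrite !ord1 !eqxx /= !andbT.
by rewrite !mulmxDl !mulmxDr -!scalemxAl -!scalemxAr -!rowE -!colE !mxE; ring.
Qed.

(* with [t = conj (A k l)], the form at [e_k + t e_l] is [2 |A k l|^2] *)
Lemma hermitian_quad_eq0 (A : 'M[K]_n) : (forall k l, conjK (A l k) = A k l) ->
  (forall f : vec, quad A f = 0) -> A = 0.
Proof.
move=> A_herm A_quad0; apply/matrixP => k l; rewrite mxE.
have A_diag0 j : A j j = 0 by rewrite -quad_delta A_quad0.
have := A_quad0 (delta_mx k 0 + conjK (A k l) *: delta_mx l 0).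
rewrite quad_deltaD !A_diag0 mulr0 addr0 add0r conjKK -[A l k]A_herm.
rewrite [_ * A k l]mulrC mul_conjK -rmorphD => /eqP.
by rewrite fmorph_eq0 paddr_eq0 ?exprn_ge0 ?absK_ge0 // sqrf_eq0 => /andP[/eqP/absK_eq0].
Qed.

Variable F : 'I_N -> vec.

Lemma frame_op_hermitian k l : conjK (frame_op F l k) = frame_op F k l.
Proof.
rewrite !mxE rmorph_sum; apply: eq_bigr => i _.
by rewrite !mxE rmorphM /= conjKK mulrC.
Qed.

Lemma quad_frame_op (f : vec) : quad (frame_op F) f = ofR b (\sum_i absK (inner f (F i)) ^+ 2).
Proof.
rewrite /frame_op mulmxA -mulmxA mxE rmorph_sum; apply: eq_bigr => i _.
have analysisE : (analysis F *m f) i 0 = inner f (F i).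
  by rewrite !mxE; apply: eq_bigr => k _; rewrite !mxE mulrC.
have synthesisE : (adj f *m synthesis F) 0 i = conjK (inner f (F i)).
  by rewrite !mxE rmorph_sum; apply: eq_bigr => k _; rewrite !mxE rmorphM /= conjKK.
by rewrite mulrC analysisE synthesisE mul_conjK.
Qed.

Lemma parseval_frame_op : is_parseval F -> frame_op F = 1%:M.
Proof.
move=> parsF; apply/eqP; rewrite -subr_eq0; apply/eqP; apply: hermitian_quad_eq0.
  move=> k l; have := frame_op_hermitian k l; rewrite !mxE rmorphB /= => ->.
  by rewrite rmorph_nat eq_sym.
move=> f; rewrite mulmxBr mulmxBl mxE quad_frame_op parsF mulmx1 adj_mul.
by rewrite !mxE eqxx mulr1n innerxx subrr.
Qed.

Lemma canonical_dual_parseval : is_parseval F -> canonical_dual F = F.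
Proof.
by move=> parsF; apply/funext => i; rewrite /canonical_dual parseval_frame_op // invmx1 mul1mx.
Qed.

End Parseval.

Theorem corollary4p4 (R : realType) (b : bool) (n N : nat)
  (F : 'I_N -> 'cV[scal R b]_n) (p : 'I_N -> R) :
  (0 < n)%N -> (n <= N)%N ->
  is_parseval F -> is_frame F ->
  is_prob_seq p -> (forall i : 'I_N, \sum_(j < N) p j - p i != 0) ->
  (spec_opt_dual p F (canonical_dual F) /\
   forall G, spec_opt_dual p F G -> forall i, G i = canonical_dual F i) ->
  (opt_dual p F 1 (canonical_dual F) /\
   (forall G, opt_dual p F 1 G -> forall i, G i = canonical_dual F i)) /\
  (forall m : nat, (1 <= m <= N)%N -> opt_dual p F m (canonical_dual F)).
Proof.
move=> _ _ parsF _ _ _; rewrite canonical_dual_parseval // => -[specF uniq_spec].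
have d1F := d1_self_eq_R1 p F.
have opt1 := spec_opt_opt_dual1 specF d1F.
have uniq1 G : opt_dual p F 1 G -> G = F.
  by move=> /(opt_dual1_spec_opt specF d1F) /uniq_spec /funext.
split; first by split=> // G /uniq1 ->.
by move=> m /andP[m_gt0 _]; apply: unique_opt_dual1_opt_dual.
Qed.
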